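(* For each $p>1$ let $u_p\in K_p$ be a nonnegative function with $Q(u_p)=J_p$. Then $$\gamma_p:=\Big(|A|^{-1}\int_A u_p^{p+1}\Big)^{\frac1{p+1}}\to 1\quad\text{as }p\to\infty,$$ where $A=B_{R_2}\setminus B_{R_1}$.
   Context: Let $n\ge2$, $B_1\subset\mathbb{R}^n$ the open unit ball, $B_R$ the ball of radius $R$ centered at the origin, and $V(|x|)\ge0$, $V\not\equiv0$, a smooth radial function on $B_1$. Let $G$ be the Neumann Green function: for $s\in(0,1)$, $-\partial_r^2G(r,s)-\frac{n-1}{r}\partial_rG(r,s)+V(r)G(r,s)=\delta_s$ in distributions on $(0,1)$ (Dirac mass w.r.t. $dr$), $\partial_rG(0,s)=\partial_rG(1,s)=0$. Let $F(r)=|\partial B_1|\,r^{n-1}/G(r,r)$. Let $\bar r\in(0,1)$ be a local minimum point of $F$, and fix $0<R_1<\bar r<R_2<1$ such that $\bar r$ is a global minimum point of $F$ on $[R_1,R_2]$; fix $c$ with $\max\{G(R_1,\bar r)/G(\bar r,\bar r),\,G(R_2,\bar r)/G(\bar r,\bar r)\}<c<1$. Let $H^1_r(B_1)=\{u\in H^1(B_1): u \text{ radial}\}$, $Q(u)=\int_{B_1}(|\nabla u|^2+V(|x|)u^2)$, and for $p>1$ $$K_p=\Big\{u\in H^1_r(B_1):\ \Big(|B_1|^{-1}\int_{B_1}|u|^{p+1}\Big)^{\frac1{p+1}}=1,\ |u|\le c \text{ in } B_{R_1}\cup(B_1\setminus B_{R_2})\Big\},\qquad J_p=\inf\{Q(u):u\in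 K_p\}.$$ *)

From HB Require Import structures.
From mathcomp Require Import all_boot all_order all_algebra.
From mathcomp Require Import all_classical all_reals all_analysis.
Set Implicit Arguments. Unset Strict Implicit. Unset Printing Implicit Defensive.
Import Order.TTheory GRing.Theory Num.Theory.
Import numFieldNormedType.Exports.
Local Open Scope classical_set_scope.
Local Open Scope ring_scope.

(* Radial functions on B_1 subset R^n are represented by their profile
   u : R -> R (u(x) = u(|x|)); only the values on ]0,1[ matter.
   Integrals of radial functions over balls/annuli are computed in polar
   coordinates: \int_{B_1} f(|x|) dx = |dB_1| \int_0^1 f(r) r^(n-1) dr. *)

Section Defs.
Context {R : realType}.
Notation mu := (@lebesgue_measure R).

(* |S^(n-1)| = |dB_1| in R^n : w_1 = 2, w_2 = 2 pi, w_(k+2) = 2 pi w_k / k *)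
Fixpoint sphere_area (n : nat) : R :=
  match n with
  | 0%N => 0
  | 1%N => 2
  | 2%N => 2 * pi
  | k.+2 => 2 * pi / k%:R * sphere_area k
  end.

Definition ball_volume (n : nat) : R := sphere_area n / n%:R.

(* x |-> V(|x|) is smooth on B_1 : the even extension of the profile is C^oo
   on ]-1,1[. *)
Definition smooth_radial_profile (V : R -> R) : Prop :=
  (forall r, V (- r) = V r) /\
  (forall k : nat, forall r, -1 < r < 1 -> derivable (derive1n k V) r 1).

(* G is the Neumann Green function of -d^2/dr^2 - (n-1)/r d/dr + V on (0,1):
   for every pole s in (0,1), g := G(.,s) is a classical solution on (0,s) and
   (s,1), continuous at s, with the jump g'(s-) - g'(s+) = 1 (i.e. -g'' has a
   Dirac mass at s), and g'(0) = g'(1) = 0 (as one-sided limits). *)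
Definition neumann_green (n : nat) (V : R -> R) (G : R -> R -> R) : Prop :=
  forall s, 0 < s < 1 ->
  let g := fun r => G r s in
  (forall r, 0 < r < 1 -> r != s ->
     derivable g r 1 /\ derivable (derive1 g) r 1 /\
     - (derive1n 2 g) r - (n.-1)%:R / r * derive1 g r + V r * g r = 0) /\
  {for s, continuous g} /\
  (exists a b : R,
     derive1 g x @[x --> s^'-] --> a /\ derive1 g x @[x --> s^'+] --> b /\ a - b = 1) /\
  derive1 g x @[x --> 0^'+] --> 0 /\
  derive1 g x @[x --> 1^'-] --> 0.

Definition Ffun (n : nat) (G : R -> R -> R) (r : R) : R :=
  sphere_area n * r ^+ n.-1 / G r r.

(* H^1_r(B_1): profile locally absolutely continuous on ]0,1[ (FTC holds with
   its a.e. derivative derive1 u) and \int_{B_1} (|grad u|^2 + u^2) < oo. *)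
Definition H1r (n : nat) (u : R -> R) : Prop :=
  (forall a b, 0 < a -> a < b -> b < 1 ->
     mu.-integrable `[a, b] (fun r => (derive1 u r)%:E) /\
     ((u b - u a)%:E = \int[mu]_(r in `[a, b]) (derive1 u r)%:E)%E) /\
  mu.-integrable `]0, 1[
    (fun r => ((derive1 u r ^+ 2 + u r ^+ 2) * r ^+ n.-1)%:E).

(* Q(u) = \int_{B_1} |grad u|^2 + V u^2 *)
Definition Qform (n : nat) (V : R -> R) (u : R -> R) : \bar R :=
  ((sphere_area n)%:E *
   \int[mu]_(r in `]0%R, 1%R[) (((derive1 u r) ^+ 2 + V r * u r ^+ 2) * r ^+ n.-1)%:E)%E.

Definition Lp1_mean (n : nat) (p : R) (u : R -> R) : \bar R :=
  (((ball_volume n)^-1 * sphere_area n)%:E *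
   \int[mu]_(r in `]0%R, 1%R[) ((`|u r| `^ (p + 1)) * r ^+ n.-1)%R%:E)%E
  `^ (p + 1)^-1.

Definition Kset (n : nat) (R1 R2 c p : R) : set (R -> R) :=
  [set u | H1r n u /\ Lp1_mean n p u = 1%E :> \bar R /\
     (forall r, 0 < r < 1 -> (r < R1 \/ R2 <= r) -> `|u r| <= c)].

Definition Jval (n : nat) (V : R -> R) (R1 R2 c p : R) : \bar R :=
  ereal_inf [set Qform n V u | u in Kset n R1 R2 c p].

Definition annulus_volume (n : nat) (R1 R2 : R) : R :=
  ball_volume n * (R2 ^+ n - R1 ^+ n).

Definition gamma_p (n : nat) (R1 R2 p : R) (u : R -> R) : R :=
  ((annulus_volume n R1 R2)^-1 * sphere_area n *
   Rintegral mu `[R1, R2[ (fun r => u r `^ (p + 1) * r ^+ n.-1)) `^ (p + 1)^-1.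

End Defs.

From HB Require Import structures.
From mathcomp Require Import all_boot all_order all_algebra.
From mathcomp Require Import all_classical all_reals all_analysis.
From mathcomp Require Import measurable_realfun ring lra.
Set Implicit Arguments.
Unset Strict Implicit.
Unset Printing Implicit Defensive.
Import Order.TTheory GRing.Theory Num.Theory.
Import numFieldNormedType.Exports.
Local Open Scope classical_set_scope.
Local Open Scope ring_scope.

(* Outside the annulus A the profile satisfies |u_p| <= c < 1, so the part of the
   normalised L^(p+1) mass of u_p lying outside A is at most c^(p+1) -> 0.  Since the
   total mass is 1, the annulus mass |B_1|^-1 \int_A u_p^(p+1) is eventually pinched
   between 1/2 and 1, and (p+1)-th roots of quantities pinched between two positive
   constants tend to 1. *)

Section powR_limits.
Context {R : realType}.

Lemma cvg_inv_succ : (p + 1)^-1 @[p --> +oo] --> (0 : R).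
Proof.
apply/gtr0_cvgV0; last exact: cvg_addrr.
by near=> p; near: p; exists 0; split => // x; lra.
Unshelve. all: by end_near. Qed.

Lemma cvg_powR_inv_succ (K : R) : 0 < K -> K `^ (p + 1)^-1 @[p --> +oo] --> (1 : R).
Proof.
move=> K_gt0.
have -> : (fun p => K `^ (p + 1)^-1) = expR \o (fun p => (p + 1)^-1 * ln K).
  by apply/funext => p; rewrite /powR gt_eqF.
have expR_cvg :=
  continuous_cvg _ (@continuous_expR R _) (@cvgMr_tmp _ _ _ _ _ _ (ln K) cvg_inv_succ).
by rewrite mul0r expR0 in expR_cvg; exact: expR_cvg.
Qed.

Lemma cvg_powR_succ_lt1 (c : R) : 0 <= c < 1 -> c `^ (p + 1) @[p --> +oo] --> 0.
Proof.
move=> /andP[c_ge0 c_lt1]; have [->|c_neq0] := eqVneq c 0.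
  apply: cvg_near_cst; near=> p; rewrite powR0 // gt_eqF //.
  by near: p; exists 0; split => // x; lra.
have lnc_lt0 : ln c < 0 by apply: ln_lt0; rewrite lt0r c_neq0 c_ge0.
have lin_cvg : (p + 1) * - ln c @[p --> +oo] --> +oo.
  apply/cvgryPge => M; near=> p; rewrite -ler_pdivrMr; last lra.
  near: p; exists (M / - ln c); split; first by rewrite num_real.
  by move=> x; lra.
have -> : (fun p => c `^ (p + 1)) = (fun x => expR (- x)) \o (fun p => (p + 1) * - ln c).
  by apply/funext => p; rewrite /powR (negbTE c_neq0) /= mulrN opprK.
exact: (cvg_comp _ _ lin_cvg (@cvgr_expR R)).
Unshelve. all: by end_near. Qed.

Lemma cvg_powR_inv_succ_pinched (x : R -> R) (a b : R) : 0 < a ->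
  (\forall p \near +oo, a <= x p <= b) -> x p `^ (p + 1)^-1 @[p --> +oo] --> (1 : R).
Proof.
move=> a_gt0 xab.
have b_gt0 : 0 < b by have [p /andP[ax xb]] := filter_ex xab; lra.
apply: (@squeeze_cvgr _ _ _ _ (fun p => a `^ (p + 1)^-1) (fun p => b `^ (p + 1)^-1));
  [|exact: cvg_powR_inv_succ|exact: cvg_powR_inv_succ].
near=> p.
have /andP[ax xb] : a <= x p <= b by near: p.
have e_ge0 : 0 <= (p + 1)^-1 by rewrite invr_ge0; near: p; exists 0; split => // y; lra.
have x_ge0 : 0 <= x p by rewrite (le_trans (ltW a_gt0)).
by apply/andP; split; apply: ge0_ler_powR; rewrite ?nnegrE ?(ltW a_gt0) ?(ltW b_gt0).
Unshelve. all: by end_near. Qed.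

End powR_limits.

Lemma sphere_area_gt0 {R : realType} (n : nat) : (0 < n)%N -> 0 < @sphere_area R n.
Proof.
elim/ltn_ind: n => -[|[|[|k]]] IH // _.
- by rewrite /= mulr_gt0 ?pi_gt0.
- have -> : @sphere_area R k.+3 = 2 * pi / k.+1%:R * sphere_area k.+1 by [].
  by rewrite !mulr_gt0 ?pi_gt0 ?invr_gt0 ?ltr0n // IH // ltnS ltnW.
Qed.

Section radial_integrals.
Context {R : realType} (n : nat).
Notation mu := (@lebesgue_measure R).

Lemma H1r_continuous (u : R -> R) : H1r n u -> {in `]0, 1[, continuous u}.
Proof.
move=> [uFTC _] x; rewrite in_itv /= => /andP[x_gt0 x_lt1].
pose a := x / 2; pose b := (x + 1) / 2.
have a_gt0 : 0 < a by rewrite divr_gt0.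
have ax : a < x by rewrite ltr_pdivrMr // mulr2n mulrDr mulr1 ltrDr.
have xb : x < b by rewrite ltr_pdivlMr // mulrDr mulr1 ltrD2l.
have b_lt1 : b < 1 by rewrite ltr_pdivrMr // mul1r ltrD2r.
have ab := lt_trans ax xb.
pose F t := parameterized_integral mu a t (derive1 u).
have uE t : a < t < b -> u t = u a + F t.
  move=> /andP[a_t t_b]; have [_ FTC] := uFTC a t a_gt0 a_t (lt_trans t_b b_lt1).
  by rewrite /F /parameterized_integral /Rintegral -FTC /= addrC subrK.
have F_cont : {for x, continuous F}.
  apply: (within_continuous_continuous ab); last by rewrite in_itv /= ax xb.
  exact: parameterized_integral_continuous (ltW ab) (uFTC a b a_gt0 ab b_lt1).1.
rewrite /continuous_at uE ?ax //; apply: cvg_trans (cvgD (cvg_cst _) F_cont).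
apply: near_eq_cvg; near=> t; apply/esym/uE.
by near: t; have := @near_in_itvoo R a b x; rewrite in_itv /= ax xb; apply.
Unshelve. all: by end_near. Qed.

Lemma H1r_measurable (u : R -> R) : H1r n u -> measurable_fun (`]0, 1[ : set R) u.
Proof.
move=> uH1; apply: open_continuous_measurable_fun; first exact: interval_open.
by move=> x; rewrite inE; exact: H1r_continuous.
Qed.

Definition Lp1_integrand (p : R) (u : R -> R) (r : R) : R :=
  `|u r| `^ (p + 1) * r ^+ n.-1.

Lemma Lp1_integrand_ge0 (p : R) (u : R -> R) (r : R) :
  0 <= r -> 0 <= Lp1_integrand p u r.
Proof. by move=> r_ge0; rewrite mulr_ge0 ?powR_ge0 ?exprn_ge0. Qed.

Lemma measurable_Lp1_integrand (p : R) (u : R -> R) :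
  H1r n u -> measurable_fun (`]0, 1[ : set R) (Lp1_integrand p u).
Proof.
move=> /H1r_measurable u_mes; apply: measurable_funM; last exact: measurable_funX.
by apply: measurableT_comp (measurable_powR _) _; exact: measurableT_comp.
Qed.

Lemma Lp1_mean_eq1_integral (p : R) (u : R -> R) : (0 < n)%N -> p + 1 != 0 ->
  Lp1_mean n p u = 1%E ->
  (\int[mu]_(r in `]0%R, 1%R[) (Lp1_integrand p u r)%:E = (n%:R^-1)%:E)%E.
Proof.
move=> n_gt0 p1_neq0; rewrite /Lp1_mean /ball_volume invf_div divfK; last first.
  by rewrite gt_eqF // sphere_area_gt0.
set I := (\int[mu]_(r in _) _)%E => I_root.
have I_ge0 : (0 <= I)%E.
  apply: integral_ge0 => r; rewrite /= in_itv /= => /andP[/ltW r_ge0 _].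
  by rewrite lee_fin Lp1_integrand_ge0.
have : (n%:R%:E * I = 1)%E.
  have -> : (n%:R%:E * I = (n%:R%:E * I) `^ ((p + 1)^-1 * (p + 1)))%E.
    by rewrite mulVf // poweRe1 // mule_ge0 // lee_fin.
  by rewrite poweRrM I_root poweR1r.
have n_neq0 : n%:R != 0 :> R by rewrite pnatr_eq0 -lt0n.
move: I_ge0; clear I_root.
case: I => [x _ /eqP| |] //=; last by rewrite gt0_muley ?lte_fin ?ltr0n.
by rewrite -EFinM eqe => /eqP nx1; congr EFin; apply: (mulfI n_neq0); rewrite nx1 mulfV.
Qed.

Lemma outer_integral_le (R1 R2 c p : R) (u : R -> R) :
  0 <= c -> 0 <= p + 1 -> H1r n u ->
  (forall r, 0 < r < 1 -> (r < R1 \/ R2 <= r) -> `|u r| <= c) ->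
  (\int[mu]_(r in `]0%R, 1%R[ `\` `[R1, R2[) (Lp1_integrand p u r)%:E
     <= (c `^ (p + 1))%:E)%E.
Proof.
move=> c_ge0 p1_ge0 uH1 u_outer.
have mesD : measurable ([set` `]0, 1[] `\` [set` `[R1, R2[] : set R).
  by apply: measurableD; exact: measurable_itv.
apply: (@le_trans _ _ (\int[mu]_(r in `]0%R, 1%R[ `\` `[R1, R2[) (c `^ (p + 1))%:E)%E).
  apply: ge0_le_integral => //.
  - move=> r [/=]; rewrite in_itv /= => /andP[/ltW r_ge0 _] _.
    by rewrite lee_fin Lp1_integrand_ge0.
  - move/measurable_EFinP: (measurable_Lp1_integrand p uH1).
    by apply: measurable_funS; [exact: measurable_itv | move=> r []].
  - move=> r [/=]; rewrite !in_itv /= => /andP[r_gt0 r_lt1] r_notin.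
    have r_outer : r < R1 \/ R2 <= r.
      case: (ltP r R1) => [|R1r]; [by left | right].
      by rewrite leNgt; apply/negP => rR2; apply: r_notin; rewrite R1r rR2.
    rewrite lee_fin /Lp1_integrand -[leRHS]mulr1.
    rewrite ler_pM ?powR_ge0 ?exprn_ge0 ?(ltW r_gt0) //.
      by apply: ge0_ler_powR; rewrite ?nnegrE //; apply: u_outer; rewrite ?r_gt0.
    by rewrite exprn_ile1 ?(ltW r_gt0) ?(ltW r_lt1).
rewrite integral_cst // -[leRHS]mule1 lee_wpmul2l ?lee_fin ?powR_ge0 //.
apply: (@le_trans _ _ (mu [set` `]0%R, 1%R[])).
  by apply: le_measure; rewrite ?inE.
by rewrite lebesgue_measure_itv /= lte_fin ltr01 oppr0 adde0.
Qed.

Definition annulus_mass (R1 R2 p : R) (u : R -> R) : R :=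
  n%:R * Rintegral mu `[R1, R2[ (Lp1_integrand p u).

Lemma annulus_mass_bounds (R1 R2 c p : R) (u : R -> R) :
  (0 < n)%N -> 0 < R1 -> R2 <= 1 -> 0 <= c -> 0 < p + 1 ->
  H1r n u -> Lp1_mean n p u = 1%E ->
  (forall r, 0 < r < 1 -> (r < R1 \/ R2 <= r) -> `|u r| <= c) ->
  1 - n%:R * c `^ (p + 1) <= annulus_mass R1 R2 p u <= 1.
Proof.
move=> n_gt0 R1_gt0 R2_le1 c_ge0 p1_gt0 uH1 u_mean u_outer.
have annulus_sub : [set` `[R1, R2[] `<=` [set` `]0%R, 1%R[].
  by move=> r /=; rewrite !in_itv /= => /andP[? ?]; apply/andP; split; lra.
have mes_annulus : measurable [set` `[R1, R2[] by exact: measurable_itv.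
have mes_outer : measurable ([set` `]0%R, 1%R[] `\` [set` `[R1, R2[]).
  by apply: measurableD; exact: measurable_itv.
set IA := (\int[mu]_(r in `[R1, R2[) (Lp1_integrand p u r)%:E)%E.
set IO := (\int[mu]_(r in `]0%R, 1%R[ `\` `[R1, R2[) (Lp1_integrand p u r)%:E)%E.
have IA_ge0 : (0 <= IA)%E.
  apply: integral_ge0 => r /annulus_sub /=; rewrite in_itv /= => /andP[r_gt0 _].
  by rewrite lee_fin Lp1_integrand_ge0 ?ltW.
have IO_ge0 : (0 <= IO)%E.
  apply: integral_ge0 => r [/=]; rewrite in_itv /= => /andP[r_gt0 _] _.
  by rewrite lee_fin Lp1_integrand_ge0 ?ltW.
have IO_le := outer_integral_le c_ge0 (ltW p1_gt0) uH1 u_outer.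
have mass_split : (n%:R^-1)%:E = (IA + IO)%E.
  rewrite -(Lp1_mean_eq1_integral n_gt0 (lt0r_neq0 p1_gt0) u_mean).
  rewrite -[in LHS](setDUK annulus_sub) ge0_integral_setU ?setDUK //.
  - by move/measurable_EFinP: (measurable_Lp1_integrand p uH1).
  - move=> r /=; rewrite in_itv /= => /andP[r_gt0 _].
    by rewrite lee_fin Lp1_integrand_ge0 ?ltW.
  - by rewrite disj_set2E setDIK.
have IA_fin : IA \is a fin_num.
  by rewrite ge0_fin_numE // (le_lt_trans (leeDl IA IO_ge0)) // -mass_split ltry.
have IO_fin : IO \is a fin_num.
  by rewrite ge0_fin_numE // (le_lt_trans (leeDr IO IA_ge0)) // -mass_split ltry.
have IO_fine_ge0 := fine_ge0 IO_ge0.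
move: mass_split IO_le; rewrite -/IO -(fineK IA_fin) -(fineK IO_fin) -EFinD lee_fin.
move=> mass_splitE IO_fine_le; have mass_split := EFin_inj mass_splitE.
have n_pos : 0 < n%:R :> R by rewrite ltr0n.
have [lo hi] : n%:R^-1 - c `^ (p + 1) <= fine IA /\ fine IA <= n%:R^-1 by split; lra.
have -> : 1 - n%:R * c `^ (p + 1) = n%:R * (n%:R^-1 - c `^ (p + 1)).
  by rewrite mulrBr mulfV ?gt_eqF.
by rewrite /annulus_mass /Rintegral -/IA ler_pM2l // -ler_pdivlMl // mulr1 lo.
Qed.

Lemma gamma_pE (R1 R2 p : R) (u : R -> R) : (0 < n)%N ->
  (forall r, R1 <= r < R2 -> 0 <= u r) ->
  gamma_p n R1 R2 p u = (annulus_mass R1 R2 p u / (R2 ^+ n - R1 ^+ n)) `^ (p + 1)^-1.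
Proof.
move=> n_gt0 u_ge0; rewrite /gamma_p /annulus_volume /ball_volume /annulus_mass.
have -> : Rintegral mu `[R1, R2[ (fun r => u r `^ (p + 1) * r ^+ n.-1) =
          Rintegral mu `[R1, R2[ (Lp1_integrand p u).
  apply: eq_Rintegral => r; rewrite inE /= in_itv /= => r_annulus.
  by rewrite /Lp1_integrand ger0_norm ?u_ge0.
congr (_ `^ _).
have s_neq0 : sphere_area n != 0 :> R by rewrite gt_eqF // sphere_area_gt0.
have n_neq0 : n%:R != 0 :> R by rewrite pnatr_eq0 -lt0n.
have [->|D_neq0] := eqVneq (R2 ^+ n - R1 ^+ n) 0.
  by rewrite !(mulr0, invr0, mul0r).
by field; rewrite s_neq0 n_neq0 D_neq0.
Qed.

End radial_integrals.

Theorem lemma3p3 (R : realType) (n : nat) (V : R -> R) (G : R -> R -> R)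
    (rbar R1 R2 c : R) (u : R -> R -> R) :
  (2 <= n)%N ->
  smooth_radial_profile V ->
  (forall r, 0 <= r < 1 -> 0 <= V r) ->
  (exists r, 0 <= r < 1 /\ V r != 0) ->
  neumann_green n V G ->
  0 < R1 -> R1 < rbar -> rbar < R2 -> R2 < 1 ->
  (* rbar is a local minimum point of F *)
  (exists d : R, 0 < d /\ forall r, 0 < r < 1 -> `|r - rbar| < d ->
     Ffun n G rbar <= Ffun n G r) ->
  (* rbar is a global minimum point of F on [R1, R2] *)
  (forall r, R1 <= r <= R2 -> Ffun n G rbar <= Ffun n G r) ->
  Num.max (G R1 rbar / G rbar rbar) (G R2 rbar / G rbar rbar) < c ->
  c < 1 ->
  (forall p, 1 < p ->
     Kset n R1 R2 c p (u p) /\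
     (forall r, 0 < r < 1 -> 0 <= u p r) /\
     Qform n V (u p) = Jval n V R1 R2 c p) ->
  gamma_p n R1 R2 p (u p) @[p --> +oo] --> (1 : R).
Proof.
move=> n_ge2 _ _ _ _ R1_gt0 R1_rbar rbar_R2 R2_lt1 _ _ _ c_lt1 u_min.
have n_gt0 : (0 < n)%N by exact: ltnW.
have n_pos : 0 < n%:R :> R by rewrite ltr0n.
have c_ge0 : 0 <= c.
  have two_gt1 : (1 : R) < 2 by lra.
  have [[_ [_ u_outer]] _] := u_min 2 two_gt1.
  apply: le_trans (normr_ge0 _) (u_outer (R1 / 2) _ _); last by left; lra.
  by apply/andP; split; lra.
pose D := R2 ^+ n - R1 ^+ n.
have D_gt0 : 0 < D by rewrite subr_gt0 ltrXn2r // -?lt0n //; lra.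
have c_small : \forall p \near +oo, n%:R * c `^ (p + 1) <= 2^-1.
  have c_unit : 0 <= c < 1 by rewrite c_ge0.
  have nc_cvg : n%:R * c `^ (p + 1) @[p --> +oo] --> (0 : R).
    by rewrite -(mulr0 n%:R); apply: cvgMl_tmp; exact: cvg_powR_succ_lt1.
  by apply: (cvgr_le 0 nc_cvg); rewrite invr_gt0.
have p_large : \forall p \near +oo, (1 : R) < p by exists 1; split => // x.
have mass_pinched : \forall p \near +oo, 2^-1 <= annulus_mass n R1 R2 p (u p) <= 1.
  near=> p.
  have p_gt1 : 1 < p by near: p.
  have p1_gt0 : 0 < p + 1 by lra.
  have [[uH1 [u_mean u_outer]] _] := u_min p p_gt1.
  have /andP[lo hi] :=
    annulus_mass_bounds n_gt0 R1_gt0 (ltW R2_lt1) c_ge0 p1_gt0 uH1 u_mean u_outer.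
  have c_le : n%:R * c `^ (p + 1) <= 2^-1 by near: p.
  by apply/andP; split; lra.
have gammaE : \forall p \near +oo,
    (annulus_mass n R1 R2 p (u p) / D) `^ (p + 1)^-1 = gamma_p n R1 R2 p (u p).
  near=> p.
  have p_gt1 : 1 < p by near: p.
  have [_ [u_ge0 _]] := u_min p p_gt1.
  rewrite gamma_pE // => r /andP[R1_r r_R2].
  by apply: u_ge0; apply/andP; split; lra.
apply: cvg_trans (near_eq_cvg gammaE) _.
apply: (cvg_powR_inv_succ_pinched (a := (2 * D)^-1) (b := D^-1)).
  by rewrite invr_gt0 mulr_gt0.
near=> p.
have /andP[lo hi] : 2^-1 <= annulus_mass n R1 R2 p (u p) <= 1 by near: p.
apply/andP; split; first by rewrite invfM ler_pM2r ?invr_gt0.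
by rewrite -[leRHS]mul1r ler_pM2r ?invr_gt0.
Unshelve. all: by end_near. Qed.
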